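(* Every Generalized Median Mechanism $M:[0,1]^n\to[0,1]$ is DIC for every capacity $k$ with $1\le k\le n$.
   Context: There are $n$ agents $N=\{1,\dots,n\}$ with locations $x_i\in[0,1]$, profile $\boldsymbol{x}$. A mechanism is a deterministic function $M:[0,1]^n\to[0,1]$ giving the facility location from reported locations. The facility has capacity $k$. Given $\boldsymbol{x}$ and $s$, agent $i$ has higher priority than $j$ if $|s-x_i|<|s-x_j|$, ties broken by a fixed deterministic rule; $N_k^*(\boldsymbol{x},s)$ is the set of the $k$ highest-priority agents. Agent $i$'s ex-post equilibrium utility (of the subgame in which agents choose whether to travel to the capacity-$k$ facility, excess travellers rationed by priority) is $u_i^*(s,\boldsymbol{x},k)=1-|s-x_i|$ if $i\in N_k^*(\boldsymbol{x},s)$ and $0$ otherwise, computed at true locations. $M$ is DIC for capacity $k$ if for every $i$, every true profile $\boldsymbol{x}$, every $x_i'\in[0,1]$, and every reports $\hat{\boldsymbol{x}}_{-i}$ of the others, $u_i^*(M(x_i,\hat{\boldsymbol{x}}_{-i}),\boldsymbol{x},k)\ge u_i^*(M(x_i',\hat{\boldsymbol{x}}_{-i}),\boldsymbol{x},k)$. $M$ is a Generalized Median Mechanism if there are constants $a_S\in[0,1]$ for $S\subseteq N$ with $M(\boldsymbol{x})=\min_{S\subseteq N}\max\{\max_{i\in S}x_i,\,a_S\}$ for all $\boldsymbol{x}$ (for $S=\emptyset$ the inner term is $a_\emptyset$). *)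

From HB Require Import structures.
From mathcomp Require Import all_boot all_order all_algebra.
From mathcomp Require Import reals.
Set Implicit Arguments. Unset Strict Implicit. Unset Printing Implicit Defensive.
Import Order.TTheory GRing.Theory Num.Theory.
Local Open Scope ring_scope.

Definition in_unit_cube (R : realType) (n : nat) (x : 'I_n -> R) : Prop :=
  forall i, 0 <= x i <= 1.

Definition upd (R : realType) (n : nat) (x : 'I_n -> R) (i : 'I_n) (v : R)
  : 'I_n -> R := fun j => if j == i then v else x j.

(* Priority at facility location s: j has higher priority than i.
   Ties in distance are broken by a fixed deterministic rule, given by an
   injective ranking rk (smaller rank wins). *)
Definition higher (R : realType) (n : nat) (rk : 'I_n -> nat)
  (x : 'I_n -> R) (s : R) (j i : 'I_n) : bool :=
  (`|s - x j| < `|s - x i|) || ((`|s - x j| == `|s - x i|) && (rk j < rk i)%N).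

Definition topk (R : realType) (n : nat) (rk : 'I_n -> nat) (k : nat)
  (x : 'I_n -> R) (s : R) : {set 'I_n} :=
  [set i | (#|[set j | higher rk x s j i]| < k)%N].

Definition eq_utility (R : realType) (n : nat) (rk : 'I_n -> nat)
  (s : R) (x : 'I_n -> R) (k : nat) (i : 'I_n) : R :=
  if i \in topk rk k x s then 1 - `|s - x i| else 0.

Definition DIC (R : realType) (n : nat) (rk : 'I_n -> nat) (k : nat)
  (M : ('I_n -> R) -> R) : Prop :=
  forall (i : 'I_n) (x : 'I_n -> R) (xi' : R) (xhat : 'I_n -> R),
    in_unit_cube x -> 0 <= xi' <= 1 -> in_unit_cube xhat ->
    eq_utility rk (M (upd xhat i xi')) x k i
      <= eq_utility rk (M (upd xhat i (x i))) x k i.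

(* The inner term is \big[max/a_S]_(i in S) x_i (= a_emptyset for S = set0);
   the outer min uses the neutral element 1, which is harmless since every
   term is <= 1 on [0,1]^n (in particular the S = set0 term a_set0 <= 1). *)
Definition GMM (R : realType) (n : nat) (M : ('I_n -> R) -> R) : Prop :=
  exists a : {set 'I_n} -> R,
    (forall S, 0 <= a S <= 1) /\
    forall x : 'I_n -> R, in_unit_cube x ->
      M x = \big[Order.min/1]_(S : {set 'I_n}) (\big[Order.max/a S]_(i in S) x i).

(* Fix the reports of everybody but agent i.  As a function of i's own report v,
   a generalized median mechanism is then a clamp v |-> min hi (max lo v):
   clamps of [0,1] contain the constants and the identity and are closed under
   pointwise max and min.  Hence the truthful outcome s = clamp (x i) lies
   between x i and the outcome s' of any misreport.  Moving the facility from s'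
   to s brings it closer to x i and, by the triangle inequality, reduces
   |s - x j| - |s - x i| for every other agent j, so nobody overtakes i in
   priority and i's utility can only grow. *)
From HB Require Import structures.
From mathcomp Require Import all_boot all_order all_algebra.
From mathcomp Require Import reals.
From mathcomp Require Import lra.
Set Implicit Arguments. Unset Strict Implicit. Unset Printing Implicit Defensive.
Import Order.TTheory GRing.Theory Num.Theory.
Local Open Scope ring_scope.

Lemma big_ind_pointwise (I T V : Type) (K : (T -> V) -> Prop)
    (op : V -> V -> V) (c : V) (r : seq I) (P : pred I) (F : I -> T -> V) :
  (forall f g, f =1 g -> K f -> K g) -> K (fun=> c) ->
  (forall f g, K f -> K g -> K (fun t => op (f t) (g t))) ->
  (forall j, K (F j)) ->
  K (fun t => \big[op/c]_(j <- r | P j) F j t).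
Proof.
move=> K_eq K_c K_op K_F; elim: r => [|j r IHr].
  by apply: K_eq K_c => t; rewrite big_nil.
case Pj: (P j).
  by apply: K_eq (K_op _ _ (K_F j) IHr) => t; rewrite big_cons Pj.
by apply: K_eq IHr => t; rewrite big_cons Pj.
Qed.

Section Clamp.
Variable R : realDomainType.

Definition between (a b c : R) : Prop := a <= b <= c \/ c <= b <= a.

Lemma dist_between (a b c : R) :
  between a b c -> `|c - a| = `|c - b| + `|b - a|.
Proof.
case=> /andP[ab bc].
  by have ac := le_trans ab bc; rewrite !ger0_norm ?subr_ge0 //; lra.
by have ca := le_trans ab bc; rewrite !ler0_norm ?subr_le0 //; lra.
Qed.

Lemma dist_le_between (a b c : R) : between a b c -> `|b - a| <= `|c - a|.
Proof. by move/dist_between->; rewrite lerDr. Qed.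

Lemma dist_diff_between (a b c y : R) :
  between a b c -> `|c - y| - `|c - a| <= `|b - y| - `|b - a|.
Proof. by move/dist_between->; have := ler_distD b c y; lra. Qed.

Lemma unit_max (a b : R) : 0 <= a <= 1 -> 0 <= b <= 1 -> 0 <= Order.max a b <= 1.
Proof. by move=> ? ?; case: (leP a b). Qed.

Lemma unit_min (a b : R) : 0 <= a <= 1 -> 0 <= b <= 1 -> 0 <= Order.min a b <= 1.
Proof. by move=> ? ?; case: (leP a b). Qed.

Definition clamp (lo hi v : R) : R := Order.min hi (Order.max lo v).

Lemma clamp_between (lo hi t w : R) :
  between t (clamp lo hi t) (clamp lo hi w).
Proof.
rewrite /between /clamp.
case: (leP lo t) => ?; case: (leP lo w) => ?;
  case: (leP hi t) => ?; case: (leP hi w) => ?; case: (leP hi lo) => ?; lra.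
Qed.

Lemma clamp_unit (lo hi v : R) :
  0 <= lo <= 1 -> 0 <= hi <= 1 -> 0 <= clamp lo hi v <= 1.
Proof. by rewrite /clamp le_min ge_min le_max; case: leP; lra. Qed.

Definition is_clamp (f : R -> R) : Prop :=
  exists lo hi, [/\ 0 <= lo <= 1, 0 <= hi <= 1 &
                    forall v, 0 <= v <= 1 -> f v = clamp lo hi v].

Lemma is_clamp_eq (f g : R -> R) : f =1 g -> is_clamp f -> is_clamp g.
Proof. by move=> fg [lo [hi [? ? fE]]]; exists lo, hi; split=> // v /fE <-. Qed.

Lemma is_clamp_const (c : R) : 0 <= c <= 1 -> is_clamp (fun=> c).
Proof. by exists c, c; split=> // v _; rewrite /clamp maxKx. Qed.

Lemma is_clamp_id : is_clamp id.
Proof.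
exists 0, 1; split; rewrite ?lexx ?ler01 // => v /andP[v0 v1].
by rewrite /clamp (max_idPr v0) (min_idPr v1).
Qed.

Lemma is_clamp_max (f g : R -> R) :
  is_clamp f -> is_clamp g -> is_clamp (fun v => Order.max (f v) (g v)).
Proof.
move=> [lo1 [hi1 [lo1_01 hi1_01 fE]]] [lo2 [hi2 [lo2_01 hi2_01 gE]]].
pose lo := Order.max (Order.min hi1 lo1) (Order.min hi2 lo2).
pose hi := Order.max lo (Order.max hi1 hi2).
have lo01 : 0 <= lo <= 1 by apply: unit_max; apply: unit_min.
exists lo, hi; split=> // [|v v01]; first by apply: unit_max => //; apply: unit_max.
rewrite fE // gE // /clamp !(min_maxr hi1) !(min_maxr hi2).
by rewrite maxACA -min_maxl -max_minr.
Qed.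

Lemma is_clamp_min (f g : R -> R) :
  is_clamp f -> is_clamp g -> is_clamp (fun v => Order.min (f v) (g v)).
Proof.
move=> [lo1 [hi1 [lo1_01 hi1_01 fE]]] [lo2 [hi2 [lo2_01 hi2_01 gE]]].
exists (Order.min lo1 lo2), (Order.min hi1 hi2).
split; [exact: unit_min | exact: unit_min | move=> v v01].
by rewrite fE // gE // /clamp minACA -max_minl.
Qed.

End Clamp.

Lemma in_unit_cube_upd (R : realType) (n : nat) (x : 'I_n -> R) i (v : R) :
  in_unit_cube x -> 0 <= v <= 1 -> in_unit_cube (upd x i v).
Proof. by move=> x01 v01 j; rewrite /upd; case: ifP. Qed.

Lemma gmm_upd_is_clamp (R : realType) (n : nat) (M : ('I_n -> R) -> R)
    (xhat : 'I_n -> R) (i : 'I_n) :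
  GMM M -> in_unit_cube xhat -> is_clamp (fun v => M (upd xhat i v)).
Proof.
move=> [a [a01 ME]] xhat01.
have : is_clamp (fun v => \big[Order.min/1]_(S : {set 'I_n})
                            \big[Order.max/a S]_(j in S) upd xhat i v j).
  apply: big_ind_pointwise => [||f g|S]; [exact: is_clamp_eq| |exact: is_clamp_min|].
    by apply: is_clamp_const; rewrite ler01 lexx.
  apply: big_ind_pointwise => [||f g|j];
    [exact: is_clamp_eq|exact: is_clamp_const|exact: is_clamp_max|].
  rewrite /upd; case: eqP => _; [exact: is_clamp_id | exact: is_clamp_const].
case=> lo [hi [lo01 hi01 fE]]; exists lo, hi; split=> // v v01.
by rewrite ME; [exact: fE | exact: in_unit_cube_upd].
Qed.

Section Priority.
Variables (R : realType) (n : nat) (rk : 'I_n -> nat) (x : 'I_n -> R).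
Variables (i : 'I_n) (s s' : R).
Hypothesis s_between : between (x i) s s'.

Lemma higher_between (j : 'I_n) : higher rk x s j i -> higher rk x s' j i.
Proof.
have := dist_diff_between (x j) s_between; rewrite /higher => shift.
case/orP=> [lt_ji | /andP[/eqP eq_ji ->]]; case: ltrP => //= le_ij.
- lra.
- by rewrite andbT; apply/eqP; lra.
Qed.

Lemma topk_between (k : nat) : i \in topk rk k x s' -> i \in topk rk k x s.
Proof.
rewrite !inE; apply: leq_ltn_trans; apply: subset_leq_card.
by apply/subsetP => j; rewrite !inE; exact: higher_between.
Qed.

Lemma eq_utility_between (k : nat) :
  0 <= s <= 1 -> 0 <= x i <= 1 -> eq_utility rk s' x k i <= eq_utility rk s x k i.
Proof.
move=> s01 xi01; rewrite /eq_utility.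
case: ifP => [/topk_between -> | _].
  by have := dist_le_between s_between; lra.
by case: ifP => _; rewrite ?lexx // subr_ge0 ler_norml; lra.
Qed.

End Priority.

Theorem proposition3p8 (R : realType) (n : nat) (rk : 'I_n -> nat)
  (M : ('I_n -> R) -> R) :
  injective rk -> GMM M ->
  forall k : nat, (1 <= k <= n)%N -> DIC rk k M.
Proof.
move=> _ gmmM k _ i x v xhat x01 v01 xhat01.
have [lo [hi [lo01 hi01 /= ME]]] := gmm_upd_is_clamp i gmmM xhat01.
rewrite !ME //.
apply: eq_utility_between; [exact: clamp_between | exact: clamp_unit | exact: x01].
Qed.
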